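(* Let $m\ge 1$, $P,Q\ge 0$ be integers with $N=P+Q\ge1$, let $D$, $F_1,\ldots,F_m$, $\mathcal{E}$, $d$ and $G_F:\mathcal{E}\to\mathcal{E}$ be as described in the context, and assume that the state network of $G_F$ is strongly connected. Then $G_F$ is topologically transitive on $(\mathcal{E},d)$: for any nonempty open sets $U',U''\subseteq\mathcal{E}$ there exists $n_0>0$ with $G_F^{n_0}(U')\cap U''\neq\varnothing$.
   Context: Let $D=\{k\,2^{-Q}: k=0,1,\ldots,2^N-1\}$ be the set of $N$-bit fixed-point numbers; each $x\in D$ is written in binary as $x=x_{P-1}x_{P-2}\ldots x_0.x_{-1}\ldots x_{-Q}$ with digits $x_j\in\{0,1\}$. For $x,y\in D$ let $x\cdot y$, $x+y$ and $\overline{x}$ denote bitwise AND, bitwise OR and bitwise NOT (complement of every one of the $N$ digits), which are again elements of $D$. Let $F_1,\ldots,F_m:D^m\to D$ be arbitrary functions. Let $\Sigma$ be the set of one-sided infinite sequences $w=w^1w^2\ldots$ with $w^k\in D$, and $\sigma:\Sigma\to\Sigma$ the left shift $\sigma(w)=w^2w^3\ldots$. Let $\mathcal{E}=\Sigma^m\times D^m$, with elements $E=((w_1,\ldots,w_m),(x_1,\ldots,x_m))$. Define $G_F:\mathcal{E}\to\mathcal{E}$ by $G_F((w_1,\ldots,w_m),x)=((\sigma(w_1),\ldots,\sigma(w_m)),(H_1,\ldots,H_m))$, where $x=(x_1,\ldots,x_m)$ and $H_i=(x_i\cdot\overline{w_i^1})+(F_i(x)\cdot w_i^1)$ (i.e.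 bit $j$ of $x_i$ is replaced by bit $j$ of $F_i(x)$ exactly when bit $j$ of $w_i^1$ is $1$). The metric on $\mathcal{E}$ is $d(E,\hat E)=\sum_{i=1}^m\sum_{k=1}^\infty \frac{|w_i^k-\hat w_i^k|}{2^{Nk}}+\sqrt{\sum_{i=1}^m (x_i-\hat x_i)^2}$. The state network of $G_F$ is the directed graph whose vertex set is $D^m$, with an edge from $\hat x$ to $\tilde x$ whenever there is some $(w_1,\ldots,w_m)\in\Sigma^m$ such that the $D^m$-component of $G_F((w_1,\ldots,w_m),\hat x)$ equals $\tilde x$. It is strongly connected if every vertex is reachable from every other vertex by a directed path. *)

From Stdlib Require Import Reals Relations.
From Coquelicot Require Import Coquelicot.
From mathcomp Require Import ssreflect ssrfun ssrbool eqtype ssrnat seq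
  choice fintype finfun bigop.

Set Implicit Arguments.
Unset Strict Implicit.
Unset Printing Implicit Defensive.

(* An N-bit fixed-point number x = x_{P-1}...x_0.x_{-1}...x_{-Q} (N = P+Q)
   is represented by its N digits: the digit x_{j-Q} is (x j) for j : 'I_N. *)
Definition D (N : nat) := {ffun 'I_N -> bool}.

Definition dval (P Q : nat) (x : D (P + Q)) : R :=
  (INR (\sum_(j < P + Q) nat_of_bool (x j) * 2 ^ j)%N / (2 ^ Q)%R)%R.

Definition band N (x y : D N) : D N := [ffun j => x j && y j].
Definition bor  N (x y : D N) : D N := [ffun j => x j || y j].
Definition bnot N (x : D N) : D N := [ffun j => ~~ x j].

(* Sigma: one-sided sequences w = w^1 w^2 ...; here w^(k+1) is (w k). *)
Definition Sigma N := nat -> D N.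
Definition shift N (w : Sigma N) : Sigma N := fun k => w k.+1.

Definition state m N := 'I_m -> D N.

Definition Ecal m N := (('I_m -> Sigma N) * state m N)%type.

Definition GF m N (F : 'I_m -> state m N -> D N) (E : Ecal m N) : Ecal m N :=
  (fun i => shift (E.1 i),
   fun i => bor (band (E.2 i) (bnot (E.1 i 0%N)))
                (band (F i E.2) (E.1 i 0%N))).

Definition dist m P Q (E E' : Ecal m (P + Q)) : R :=
  (\big[Rplus/0%R]_(i < m)
      Series (fun k => Rabs (dval (E.1 i k) - dval (E'.1 i k))
                       / (2 ^ ((P + Q) * k.+1))%R)
   + sqrt (\big[Rplus/0%R]_(i < m) (dval (E.2 i) - dval (E'.2 i)) ^ 2))%R.

Definition d_open m P Q (U : Ecal m (P + Q) -> Prop) : Prop :=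
  forall E, U E -> exists r : R, (0 < r)%R /\
    forall E', (dist E E' < r)%R -> U E'.

Definition state_edge m N (F : 'I_m -> state m N -> D N)
  (x y : state m N) : Prop :=
  exists ws : 'I_m -> Sigma N, (GF F (ws, x)).2 = y.

Definition strongly_connected m N (F : 'I_m -> state m N -> D N) : Prop :=
  forall x y : state m N, clos_refl_trans (state m N) (state_edge F) x y.

Definition topologically_transitive m P Q
  (G : Ecal m (P + Q) -> Ecal m (P + Q)) : Prop :=
  forall U U' : Ecal m (P + Q) -> Prop,
    d_open U -> d_open U' -> (exists E, U E) -> (exists E, U' E) ->
    exists n0 : nat, (0 < n0)%N /\
      exists E, U E /\ U' (Nat.iter n0 G E).

(* A point (w, x) of the phase space is approached by any point whose first K
   control words agree with those of w, at distance O(2^-K), because the k-th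
   term of the series part of d is at most 2^-k.  So from (w, x) one first
   follows the first K controls of w, reaching some state y, then uses strong
   connectedness to steer y to the state x' of a target point (w', x'), and
   finally continues with w'.  This initial point is close to (w, x) and is
   mapped exactly onto (w', x'). *)

From Stdlib Require Import Reals Relations Lra FunctionalExtensionality.
From Coquelicot Require Import Coquelicot.
From mathcomp Require Import ssreflect ssrfun ssrbool eqtype ssrnat seq
  choice fintype finfun bigop.
From mathcomp Require Import zify.
From HB Require Import structures.

Set Implicit Arguments.
Unset Strict Implicit.

HB.instance Definition _ := Monoid.isComLaw.Build R 0%R Rplus
  (fun a b c => esym (Rplus_assoc a b c)) Rplus_comm Rplus_0_l.

Lemma big_Rplus_le_const n (f : 'I_n -> R) c : (forall i, f i <= c)%R ->
  (\big[Rplus/0%R]_(i < n) f i <= INR n * c)%R.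
Proof.
elim: n f => [|n IH] f fc; first by rewrite big_ord0 /=; lra.
rewrite big_ord_recr S_INR Rmult_plus_distr_r Rmult_1_l.
by apply: Rplus_le_compat; [apply: IH => i; apply: fc | apply: fc].
Qed.

Lemma INR_expn b n : INR (b ^ n) = (INR b ^ n)%R.
Proof. by elim: n => [|n IH] //=; rewrite expnS mult_INR IH. Qed.

Lemma bits_sum_lt n (x : {ffun 'I_n -> bool}) :
  (\sum_(j < n) x j * 2 ^ j < 2 ^ n)%N.
Proof.
elim: n x => [|n IH] x; first by rewrite big_ord0.
rewrite big_ord_recr /= expnS.
have := IH [ffun j : 'I_n => x (widen_ord (leqnSn n) j)].
under [X in (X < _)%N -> _]eq_bigr => j _ do rewrite ffunE.
by case: (x ord_max) => /=; lia.
Qed.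

Lemma dval_bounds P Q (x : D (P + Q)) : (0 <= dval x <= 2 ^ (P + Q))%R.
Proof.
rewrite /dval; set s := (\sum_(j < P + Q) _)%N.
have s_le : (INR s <= 2 ^ (P + Q))%R.
  by rewrite -[2%R]/(INR 2) -INR_expn; apply/le_INR/leP/ltnW/bits_sum_lt.
have s_ge0 := pos_INR s.
have pow2Q_ge1 : (1 <= 2 ^ Q)%R by apply: pow_R1_Rle; lra.
split; first by apply: Rdiv_le_0_compat; lra.
apply: Rle_trans s_le; rewrite /Rdiv -{2}[INR s]Rmult_1_r.
by apply: Rmult_le_compat_l => //; rewrite -Rinv_1; apply: Rinv_le_contravar; lra.
Qed.

Lemma dist_term_bounds P Q (u v : D (P + Q)) k : (1 <= P + Q)%N ->
  (0 <= Rabs (dval u - dval v) / 2 ^ ((P + Q) * k.+1) <= (/ 2) ^ k)%R.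
Proof.
move=> N_ge1.
have diff_le : (Rabs (dval u - dval v) <= 2 ^ (P + Q))%R.
  have := dval_bounds u; have := dval_bounds v.
  by move=> ? ?; rewrite /Rabs; case: Rcase_abs => ?; lra.
have pow2N_gt0 : (0 < 2 ^ (P + Q))%R by apply: pow_lt; lra.
have pow2k_gt0 : (0 < 2 ^ k)%R by apply: pow_lt; lra.
have pow2k_le : (2 ^ k <= 2 ^ ((P + Q) * k))%R.
  by apply: Rle_pow; [lra | apply/leP; rewrite -{1}[k]mul1n leq_mul].
rewrite mulnS pow_add pow_inv /Rdiv Rinv_mult; split.
  apply: Rmult_le_pos; first exact: Rabs_pos.
  by apply/Rlt_le/Rmult_lt_0_compat; apply: Rinv_0_lt_compat; lra.
apply: (Rle_trans _ (2 ^ (P + Q) * (/ 2 ^ (P + Q) * / 2 ^ ((P + Q) * k)))).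
  apply: Rmult_le_compat_r => //.
  by apply/Rlt_le/Rmult_lt_0_compat; apply: Rinv_0_lt_compat; lra.
by rewrite -Rmult_assoc Rinv_r ?Rmult_1_l; [apply: Rinv_le_contravar | lra].
Qed.

Lemma Series_dist_le_agree P Q (u v : Sigma (P + Q)) K :
  (1 <= P + Q)%N -> (0 < K)%N -> (forall k, (k < K)%N -> u k = v k) ->
  (Series (fun k => Rabs (dval (u k) - dval (v k)) / 2 ^ ((P + Q) * k.+1))
    <= 2 * (/ 2) ^ K)%R.
Proof.
move=> N_ge1 K_gt0 uv; set a := fun k => _.
have a_bnd k : (0 <= a k <= (/ 2) ^ k)%R by apply: dist_term_bounds.
have geom : is_series (fun k => (/ 2) ^ k)%R 2%R.
  have half_lt1 : (Rabs (/ 2) < 1)%R by rewrite Rabs_pos_eq; lra.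
  by have := is_series_geom _ half_lt1; replace (/ (1 - / 2))%R with 2%R by field.
have a_ex : ex_series a.
  apply: (ex_series_le _ (fun k => (/ 2) ^ k)%R); last by exists 2%R.
  move=> k; have [? ?] := a_bnd k.
  by change (norm (a k)) with (Rabs (a k)); rewrite Rabs_pos_eq.
rewrite (Series_incr_n _ K) //; last by apply/ltP.
rewrite sum_eq_R0 ?Rplus_0_l; last first.
  move=> k /leP k_le; rewrite /a uv; last by rewrite -(ltn_predK K_gt0) ltnS.
  by rewrite Rminus_diag Rabs_R0 /Rdiv Rmult_0_l.
have tail : is_series (fun k => (/ 2) ^ K * (/ 2) ^ k)%R ((/ 2) ^ K * 2)%R.
  exact: (@is_series_scal_l R_AbsRing R_NormedModule ((/ 2) ^ K)%R _ _ geom).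
rewrite Rmult_comm -(is_series_unique _ _ tail).
apply: Series_le; last by exists ((/ 2) ^ K * 2)%R.
by move=> k; rewrite -pow_add; apply: a_bnd.
Qed.

Lemma dist_le_agree m P Q (w w' : 'I_m -> Sigma (P + Q)) x K :
  (1 <= P + Q)%N -> (0 < K)%N ->
  (forall i k, (k < K)%N -> w i k = w' i k) ->
  (dist (w, x) (w', x) <= INR m * (2 * (/ 2) ^ K))%R.
Proof.
move=> N_ge1 K_gt0 ww'; rewrite /dist /= [X in sqrt X]big1 ?sqrt_0 ?Rplus_0_r.
  by apply: big_Rplus_le_const => i; apply: Series_dist_le_agree => // k /ww'.
by move=> i _; rewrite Rminus_diag; ring.
Qed.

Section Controls.

Variables (m N : nat) (F : 'I_m -> state m N -> D N).

Definition step (a : 'I_m -> D N) (x : state m N) : state m N :=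
  fun i => bor (band (x i) (bnot (a i))) (band (F i x) (a i)).

Definition run (s : seq ('I_m -> D N)) (x : state m N) : state m N :=
  foldl (fun y a => step a y) x s.

Lemma run_cat s1 s2 x : run (s1 ++ s2) x = run s2 (run s1 x).
Proof. exact: foldl_cat. Qed.

Definition prepend (s : seq ('I_m -> D N)) (w : 'I_m -> Sigma N)
    : 'I_m -> Sigma N :=
  fun i k => if (k < size s)%N then nth (fun _ => [ffun=> false]) s k i
             else w i (k - size s)%N.

Definition controls (K : nat) (w : 'I_m -> Sigma N) : seq ('I_m -> D N) :=
  [seq (fun i => w i k) | k <- iota 0 K].

Lemma iter_GF_prepend s w x :
  Nat.iter (size s) (GF F) (prepend s w, x) = (w, run s x).
Proof.
elim: s x => [|a s IH] x.
  by congr pair; do 2!apply: functional_extensionality => ?; rewrite /prepend subn0.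
by rewrite [size _]/= Nat.iter_succ_r -IH.
Qed.

Lemma prepend_controls K s w w' i k :
  (k < K)%N -> prepend (controls K w ++ s) w' i k = w i k.
Proof.
move=> k_lt; have size_c : size (controls K w) = K by rewrite size_map size_iota.
rewrite /prepend size_cat size_c (leq_trans k_lt (leq_addr _ _)) nth_cat size_c k_lt.
by rewrite (nth_map 0%N) ?size_iota // nth_iota.
Qed.

Lemma reachable_run x y :
  clos_refl_trans (state m N) (state_edge F) x y -> exists s, run s x = y.
Proof.
elim=> [a b [ws <-]|a|a b c _ [s1 <-] _ [s2 <-]].
- by exists [:: fun i => ws i 0%N].
- by exists [::].
- by exists (s1 ++ s2); rewrite run_cat.
Qed.

End Controls.

Lemma geometric_small m r : (1 <= m)%N -> (0 < r)%R ->
  exists K, (0 < K)%N /\ (INR m * (2 * (/ 2) ^ K) < r)%R.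
Proof.
move=> m_ge1 r_gt0; have m_gt0 : (0 < INR m)%R by apply/lt_0_INR/ltP.
have [K0 small] : exists K0, forall n, (n >= K0)%coq_nat ->
    (Rabs ((/ 2) ^ n) < r / (2 * INR m))%R.
  by apply: pow_lt_1_zero; [rewrite Rabs_pos_eq; lra | apply: Rdiv_lt_0_compat; lra].
exists (maxn K0 1); split; first by rewrite leq_max orbT.
have := small _ (leP (leq_maxl K0 1)); rewrite Rabs_pos_eq; last by apply: pow_le; lra.
move=> lt_r; apply: (Rlt_le_trans _ (INR m * (2 * (r / (2 * INR m))))).
  by apply: Rmult_lt_compat_l => //; lra.
by right; field; lra.
Qed.

Theorem theorem2 (m P Q : nat) (hm : (1 <= m)%N) (hN : (1 <= P + Q)%N)
  (F : 'I_m -> state m (P + Q) -> D (P + Q)) :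
  strongly_connected F ->
  topologically_transitive (m := m) (P := P) (Q := Q) (GF F).
Proof.
move=> SC U U' openU _ [[w x] Uwx] [[w' x'] U'wx'].
have [r [r_gt0 ballU]] := openU _ Uwx.
have [K [K_gt0 small]] := geometric_small hm r_gt0.
have [s run_s] := reachable_run (SC (run F (controls K w) x) x').
set c := controls K w ++ s.
exists (size c); split.
  by rewrite size_cat size_map size_iota; apply: leq_trans K_gt0 (leq_addr _ _).
exists (prepend c w', x); split.
  apply: ballU; apply: Rle_lt_trans small.
  by apply: dist_le_agree => // i k k_lt; rewrite prepend_controls.
by rewrite iter_GF_prepend run_cat run_s.
Qed.
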